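(* Let $E$ and $E^c=\partial\overline{\mathcal{G}}\setminus E$ be nonempty clopen subsets of $\partial\overline{\mathcal{G}}$. Let $f:\overline{\mathcal{G}}\to\mathbb{R}$ be harmonic with $f=C\ge 0$ on $E$ and $f>C$ on $E^c$. Let $\epsilon>0$, and let $t$ be a regular value of $f$ with $C<t<\min_{x\in E^c}f(x)$ and $d(x,E)<\epsilon$ whenever $f(x)\le t$. Then $f^{-1}(t)$ is a finite set of points interior to edges of $\mathcal{G}$. Let $\widetilde{\mathcal{G}}$ be the graph obtained from $\mathcal{G}$ by adding the points of $f^{-1}(t)$ as vertices and subdividing the corresponding edges, and put $\mathcal{G}_t=\widetilde{\mathcal{G}}\cap f^{-1}([t,\infty))$. Then: - $\mathcal{G}_t$ is a subgraph of $\widetilde{\mathcal{G}}$, namely a union of closed edges of $\widetilde{\mathcal{G}}$; - every point of $f^{-1}(t)$ is a boundary vertex of $\mathcal{G}_t$ (of degree one); - $\partial_\nu f(x)>0$ for every $x$ with $f(x)=t$, where $\partial_\nu$ is computed along the edge of $\mathcal{G}_t$ incident on $x$, in the direction pointing from $x$ into that edge.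
   Context: $\mathcal{G}$ is a connected, locally finite metric graph with countable vertex set and countable edge set. Each edge has a positive length and is identified with an interval. $\mathcal{G}$ carries the geodesic distance $d$, and $\overline{\mathcal{G}}$ is its metric completion. A designated set of vertices, containing all vertices of degree $1$, forms the boundary vertices. $\mathcal{G}_{int}$ is $\mathcal{G}$ minus the boundary vertices, and $\partial\overline{\mathcal{G}}=\overline{\mathcal{G}}\setminus\mathcal{G}_{int}$. Standing assumptions: $\overline{\mathcal{G}}$ is compact and $\partial\overline{\mathcal{G}}$ is totally disconnected. Clopen means open and closed in $\partial\overline{\mathcal{G}}$. A function $f:\overline{\mathcal{G}}\to\mathbb{R}$ is harmonic if it is continuous, linear on each edge, and satisfies $\sum_{e\sim v}\partial_\nu f_e(v)=0$ at every interior vertex $v$, where $\partial_\nu f_e(v)$ is the derivative of $f_e$ at $v$ in the direction from $v$ into the edge $e$. A point $x\in\mathcal{G}$ is a critical point of $f$ if $x$ is a vertex or $f'(x)=0$. A number is a critical value if its preimage contains a critical point. Values in the range of $f$ that are not critical values are regular values. *)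

From Stdlib Require Import Reals Lra List ClassicalEpsilon.
Open Scope R_scope.

(* A metric graph: vertices, edges, endpoints of each edge (an edge e is
   identified with the interval [0, len e], parameter 0 at [src e] and
   parameter [len e] at [tgt e]); loops and multiple edges are allowed. *)
Record MetricGraph := {
  Vx : Type;
  Ed : Type;
  src : Ed -> Vx;
  tgt : Ed -> Vx;
  len : Ed -> R;
  len_pos : forall e, 0 < len e
}.

Section Graph.
Variable G : MetricGraph.

Definition incident (e : Ed G) (v : Vx G) : Prop := src G e = v \/ tgt G e = v.

Definition countable_type (T : Type) : Prop :=
  exists c : T -> nat, forall x y, c x = c y -> x = y.

Definition locally_finite : Prop :=
  forall v, exists l : list (Ed G), forall e, incident e v <-> In e l.

Fixpoint is_walk (u v : Vx G) (l : list (Ed G)) : Prop :=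
  match l with
  | nil => u = v
  | e :: l' => (src G e = u /\ is_walk (tgt G e) v l')
            \/ (tgt G e = u /\ is_walk (src G e) v l')
  end.

Fixpoint walk_len (l : list (Ed G)) : R :=
  match l with nil => 0 | e :: l' => len G e + walk_len l' end.

Definition connected_graph : Prop := forall u v, exists l, is_walk u v l.

Definition degree_one (v : Vx G) : Prop :=
  exists e, incident e v /\ src G e <> tgt G e /\
            forall e', incident e' v -> e' = e.

Definition Point : Type :=
  (Vx G + { p : Ed G * R | 0 < snd p < len G (fst p) })%type.

Definition pt (e : Ed G) (s : R) : Point :=
  match Rlt_dec 0 s with
  | left h1 =>
      match Rlt_dec s (len G e) with
      | left h2 => inr (exist _ (e, s) (conj h1 h2))
      | right _ => inl (tgt G e)
      end
  | right _ => inl (src G e)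
  end.

Definition exits (x : Point) (a : Vx G) (da : R) : Prop :=
  match x with
  | inl v => a = v /\ da = 0
  | inr p => let e := fst (proj1_sig p) in let s := snd (proj1_sig p) in
             (a = src G e /\ da = s) \/ (a = tgt G e /\ da = len G e - s)
  end.

Definition path_length (x y : Point) (r : R) : Prop :=
  (exists a da b db l, exits x a da /\ exits y b db /\ is_walk a b l /\
                       r = da + walk_len l + db)
  \/ (match x, y with
      | inr p, inr q => fst (proj1_sig p) = fst (proj1_sig q) /\
                        r = Rabs (snd (proj1_sig p) - snd (proj1_sig q))
      | _, _ => False end).

Definition geodesic_dist (x y : Point) (r : R) : Prop :=
  (forall r', path_length x y r' -> r <= r') /\
  (forall m, (forall r', path_length x y r' -> m <= r') -> m <= r).

Variable Bd : Vx G -> Prop.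

Definition boundary_vertices_ok : Prop := forall v, degree_one v -> Bd v.

Definition in_Gint (p : Point) : Prop :=
  match p with inl v => ~ Bd v | inr _ => True end.

Variable X : Type.
Variable dX : X -> X -> R.
Variable iota : Point -> X.

Definition is_metric : Prop :=
  (forall x y, 0 <= dX x y) /\ (forall x y, dX x y = 0 <-> x = y) /\
  (forall x y, dX x y = dX y x) /\
  (forall x y z, dX x z <= dX x y + dX y z).

Definition cauchy (u : nat -> X) : Prop :=
  forall eps, 0 < eps -> exists N, forall n m, (N <= n)%nat -> (N <= m)%nat ->
    dX (u n) (u m) < eps.

Definition converges_to (u : nat -> X) (l : X) : Prop :=
  forall eps, 0 < eps -> exists N, forall n, (N <= n)%nat -> dX (u n) l < eps.

Definition is_metric_completion : Prop :=
  is_metric /\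
  (forall x y r, geodesic_dist x y r -> dX (iota x) (iota y) = r) /\
  (forall z eps, 0 < eps -> exists p, dX z (iota p) < eps) /\
  (forall u, cauchy u -> exists l, converges_to u l).

Definition open_set (U : X -> Prop) : Prop :=
  forall x, U x -> exists r, 0 < r /\ forall y, dX x y < r -> U y.

Definition compact_space : Prop :=
  forall (I : Type) (U : I -> X -> Prop), (forall i, open_set (U i)) ->
    (forall x, exists i, U i x) ->
    exists l : list I, forall x, exists i, In i l /\ U i x.

Definition bdry (x : X) : Prop := ~ exists p, in_Gint p /\ iota p = x.

Definition connected_subset (S : X -> Prop) : Prop :=
  ~ exists U1 U2, open_set U1 /\ open_set U2 /\
      (forall x, S x -> U1 x \/ U2 x) /\
      (forall x, S x -> U1 x -> U2 x -> False) /\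
      (exists x, S x /\ U1 x) /\ (exists x, S x /\ U2 x).

Definition totally_disconnected (B : X -> Prop) : Prop :=
  forall S : X -> Prop, (forall x, S x -> B x) -> connected_subset S ->
    forall x y, S x -> S y -> x = y.

Definition clopen_in (B E : X -> Prop) : Prop :=
  (forall x, E x -> B x) /\
  (exists U, open_set U /\ forall x, E x <-> (B x /\ U x)) /\
  (exists U, open_set U /\ forall x, (B x /\ ~ E x) <-> (B x /\ U x)).

Variable f : X -> R.

Definition continuous_X : Prop :=
  forall x eps, 0 < eps -> exists delta, 0 < delta /\
    forall y, dX x y < delta -> Rabs (f x - f y) < eps.

Definition fe (e : Ed G) (s : R) : R := f (iota (pt e s)).

Definition slope (e : Ed G) : R := (fe e (len G e) - fe e 0) / len G e.

(* derivative of f_e at v in the direction from v into e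
   (sum over both ends for a loop) *)
Definition out_deriv (v : Vx G) (e : Ed G) : R :=
  (if excluded_middle_informative (src G e = v) then slope e else 0) +
  (if excluded_middle_informative (tgt G e = v) then - slope e else 0).

Fixpoint sum_list (l : list (Ed G)) (g : Ed G -> R) : R :=
  match l with nil => 0 | e :: l' => g e + sum_list l' g end.

Definition harmonic : Prop :=
  continuous_X /\
  (forall e s, 0 <= s <= len G e -> fe e s = fe e 0 + slope e * s) /\
  (forall v, ~ Bd v -> forall l, NoDup l -> (forall e, incident e v <-> In e l) ->
     sum_list l (out_deriv v) = 0).

Definition critical_point (p : Point) : Prop :=
  match p with
  | inl _ => True
  | inr q => slope (fst (proj1_sig q)) = 0
  end.

Definition critical_value (c : R) : Prop :=
  exists p, critical_point p /\ f (iota p) = c.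

Definition regular_value (t : R) : Prop :=
  (exists x, f x = t) /\ ~ critical_value t.

(** Subdivision of G at a finite list S of interior points (e, s). *)
Definition is_cut (S : list (Ed G * R)) (e : Ed G) (a : R) : Prop :=
  a = 0 \/ a = len G e \/ In (e, a) S.

Definition tilde_edge (S : list (Ed G * R)) (e : Ed G) (a b : R) : Prop :=
  0 <= a /\ a < b /\ b <= len G e /\ is_cut S e a /\ is_cut S e b /\
  forall c, a < c < b -> ~ is_cut S e c.

Definition seg_in_Gt (t : R) (e : Ed G) (a b : R) : Prop :=
  forall s, a <= s <= b -> t <= fe e s.

End Graph.

From Pilot Require Import Defs.
From Stdlib Require Import Reals List.
Open Scope R_scope.

From Stdlib Require Import Lra Psatz ProofIrrelevance Classical FinFun.

(* On an edge [e] the function [f] is affine, so if its slope is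
   nonzero it takes the value [t] at exactly one parameter of the affine
   extension, the crossing of [e]; since [t] is regular, [f^{-1}(t)] contains
   no vertex and meets an edge only at its crossing, and only if that crossing
   is interior.  The boundary of the completion avoids level [t]
   ([f = C < t] on [E], [f >= min f|E^c > t] on [E^c]), so [f^{-1}(t)] is
   exactly the set of interior crossing points.  A crossing point at
   parameter [s] of [e] is at distance at least [min(s, len e - s)] from any
   point interior to another edge, so [f^{-1}(t)] is a closed subset of the
   compact completion in which every point is isolated by a fixed radius:
   it is finite.  After subdividing at these points, [f - t] has constant
   sign on every edge of the subdivision, and at a crossing point the edge of
   [G_t] is the half on which the slope points upwards. *)

Lemma exists_NoDup_enum (A : Type) (P : A -> Prop) (l : list A) :
  (forall x, P x -> In x l) -> exists l', NoDup l' /\ forall x, In x l' <-> P x.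
Proof.
  revert P; induction l as [|a l IH]; intros P HP.
  - exists nil; split; [constructor|].
    intros x; split; [intros []|intros Hx; destruct (HP x Hx)].
  - destruct (IH (fun x => P x /\ x <> a)) as [l' [Hnd Hl']].
    { intros x [Px Hxa]. destruct (HP x Px) as [Hax|Hin]; [congruence|assumption]. }
    destruct (classic (P a)) as [Pa|nPa].
    + exists (a :: l'); split.
      * constructor; [|assumption]. intros Hin. apply Hl' in Hin. tauto.
      * intros x; split.
        -- intros [<-|Hin]; [assumption|apply Hl' in Hin; tauto].
        -- intros Px. destruct (classic (x = a)) as [->|Hxa];
             [left; reflexivity|right; apply Hl'; tauto].
    + exists l'; split; [assumption|]. intros x; split.
      * intros Hin; apply Hl' in Hin; tauto.
      * intros Px; apply Hl'; split; [assumption|]. intros ->; contradiction.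
Qed.

Section MetricSpace.
Variables (X : Type) (dX : X -> X -> R).
Hypothesis dX_refl : forall x, dX x x = 0.
Hypothesis dX_triangle : forall x y z, dX x z <= dX x y + dX y z.

Lemma open_ball (c : X) (r : R) : Defs.open_set X dX (fun y => dX c y < r).
Proof.
  intros x Hx. exists (r - dX c x); split; [lra|].
  intros y Hy. pose proof (dX_triangle c x y). lra.
Qed.

Lemma open_neq_of_continuous (f : X -> R) (t : R) :
  continuous_X X dX f -> Defs.open_set X dX (fun y => f y <> t).
Proof.
  intros Hcont x Hx.
  destruct (Hcont x (Rabs (f x - t))) as [d [Hd Hc]]; [apply Rabs_pos_lt; lra|].
  exists d; split; [exact Hd|]. intros y Hy Hyt.
  specialize (Hc y Hy). rewrite Hyt in Hc. lra.
Qed.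

(* Cover by [U] and the balls [B(x i, rho i)]: each ball contains no other
   point of the family, so a finite subcover lists all of them. *)
Lemma compact_separated_finite (I : Type) (Q : I -> Prop) (x : I -> X)
    (rho : I -> R) (U : X -> Prop) :
  compact_space X dX -> Defs.open_set X dX U ->
  (forall y, ~ U y -> exists i, Q i /\ y = x i) ->
  (forall i, Q i -> ~ U (x i)) ->
  (forall i, Q i -> 0 < rho i) ->
  (forall i j, Q i -> Q j -> i <> j -> rho i <= dX (x i) (x j)) ->
  exists l, NoDup l /\ forall i, In i l <-> Q i.
Proof.
  intros Hcpt HU Hcov HxU Hrho Hsep.
  set (V := fun (o : option I) y =>
              match o with None => U y | Some i => Q i /\ dX (x i) y < rho i end).
  destruct (Hcpt (option I) V) as [l Hl].
  - intros [i|] y Hy; [|exact (HU y Hy)].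
    destruct Hy as [Qi Hy]. destruct (open_ball (x i) (rho i) y Hy) as [r [Hr Hball]].
    exists r; split; [exact Hr|]. intros z Hz. split; [exact Qi|exact (Hball z Hz)].
  - intros y. destruct (classic (U y)) as [Uy|nUy]; [exists None; exact Uy|].
    destruct (Hcov y nUy) as [i [Qi ->]].
    exists (Some i). split; [exact Qi|]. rewrite dX_refl. exact (Hrho i Qi).
  - apply (exists_NoDup_enum _ Q
      (flat_map (fun o => match o with Some i => i :: nil | None => nil end) l)).
    intros i Qi. destruct (Hl (x i)) as [[j|] [Hin HV]].
    + destruct HV as [Qj Hd].
      destruct (classic (j = i)) as [<-|Hji].
      * apply in_flat_map. exists (Some j). split; [exact Hin|left; reflexivity].
      * pose proof (Hsep j i Qj Qi Hji). lra.
    + exfalso. exact (HxU i Qi HV).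
Qed.

End MetricSpace.

Section GraphPoints.
Variable G : MetricGraph.

Lemma pt_interior e s (h : 0 < s < len G e) :
  pt G e s = inr (exist (fun p : Ed G * R => 0 < snd p < len G (fst p)) (e, s) h).
Proof.
  unfold pt. destruct (Rlt_dec 0 s) as [h1|h1]; [|exfalso; lra].
  destruct (Rlt_dec s (len G e)) as [h2|h2]; [|exfalso; lra].
  do 2 f_equal. apply proof_irrelevance.
Qed.

Lemma pt_src e : pt G e 0 = inl (src G e).
Proof. unfold pt; destruct (Rlt_dec 0 0); [exfalso; lra|reflexivity]. Qed.

Lemma pt_tgt e : pt G e (len G e) = inl (tgt G e).
Proof.
  pose proof (len_pos G e).
  unfold pt; destruct (Rlt_dec 0 (len G e)); [|exfalso; lra].
  destruct (Rlt_dec (len G e) (len G e)); [exfalso; lra|reflexivity].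
Qed.

Lemma walk_len_ge0 l : 0 <= walk_len G l.
Proof. induction l as [|e l IH]; simpl; [lra|]. pose proof (len_pos G e); lra. Qed.

(* A path leaving an interior point for another edge passes through an end of
   its own edge. *)
Lemma path_length_distinct_edges_ge
    (p q : {p : Ed G * R | 0 < snd p < len G (fst p)}) r :
  fst (proj1_sig p) <> fst (proj1_sig q) ->
  path_length G (inr p) (inr q) r ->
  Rmin (snd (proj1_sig p)) (len G (fst (proj1_sig p)) - snd (proj1_sig p)) <= r.
Proof.
  destruct p as [[e1 s1] h1]; destruct q as [[e2 s2] h2]; simpl in *.
  intros Hne [[a [da [b [db [l [Hx [Hy [_ ->]]]]]]]] | [Heq _]]; [|contradiction].
  simpl in Hx, Hy. pose proof (walk_len_ge0 l).
  assert (0 <= db) by (destruct Hy as [[_ ->]|[_ ->]]; lra).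
  destruct Hx as [[_ ->]|[_ ->]];
    [pose proof (Rmin_l s1 (len G e1 - s1)) | pose proof (Rmin_r s1 (len G e1 - s1))]; lra.
Qed.

Hypothesis G_connected : connected_graph G.

Lemma geodesic_dist_exists x y (m : R) :
  (exists a da b db, exits G x a da /\ exits G y b db) ->
  (forall r, path_length G x y r -> m <= r) ->
  exists r0, geodesic_dist G x y r0 /\ m <= r0.
Proof.
  intros [a [da [b [db [Ha Hb]]]]] Hlb.
  destruct (G_connected a b) as [l Hl].
  set (Q := fun z => path_length G x y (- z)).
  assert (Hbd : bound Q) by (exists (- m); intros z Hz; apply Hlb in Hz; lra).
  assert (Hne : exists z, Q z).
  { exists (- (da + walk_len G l + db)). unfold Q. rewrite Ropp_involutive.
    left. exists a, da, b, db, l. tauto. }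
  destruct (completeness Q Hbd Hne) as [M [HM1 HM2]].
  exists (- M). split; [split|].
  - intros r' Hr'. assert (HQ : Q (- r')) by (unfold Q; rewrite Ropp_involutive; exact Hr').
    apply HM1 in HQ. lra.
  - intros m' Hm'. assert (M <= - m'); [apply HM2; intros z Hz; apply Hm' in Hz; lra|lra].
  - assert (M <= - m); [apply HM2; intros z Hz; apply Hlb in Hz; lra|lra].
Qed.

Lemma exists_incident_edge (X : Type) (dX : X -> X -> R) (iota : Point G -> X) :
  (forall x y, 0 <= dX x y) -> (forall x y, dX x y = 0 -> x = y) ->
  (forall z eps, 0 < eps -> exists p, dX z (iota p) < eps) ->
  (exists x y : X, x <> y) ->
  forall v, exists e, incident G e v.
Proof.
  intros Hd0 Hdeq Hdense [x [y Hxy]] v. apply NNPP; intros Hno.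
  assert (Hall : forall u, u = v).
  { intros u. destruct (G_connected v u) as [[|e l] Hw]; [symmetry; exact Hw|].
    exfalso; apply Hno; exists e; destruct Hw as [[H _]|[H _]]; [left|right]; exact H. }
  assert (Hpt : forall p : Point G, p = inl v).
  { intros [u|q]; [rewrite (Hall u); reflexivity|].
    exfalso; apply Hno. exists (fst (proj1_sig q)). left; apply Hall. }
  assert (Hone : forall z, z = iota (inl v)).
  { intros z. apply Hdeq. apply Rle_antisym; [|apply Hd0]. apply Rnot_lt_le; intros Hpos.
    destruct (Hdense z _ Hpos) as [p Hp]. rewrite (Hpt p) in Hp. lra. }
  apply Hxy. rewrite (Hone x), (Hone y). reflexivity.
Qed.

Variables (X : Type) (dX : X -> X -> R) (iota : Point G -> X).
Hypothesis iota_isometry :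
  forall x y r, geodesic_dist G x y r -> dX (iota x) (iota y) = r.

Lemma dist_interior_points_distinct_edges
    (p q : {p : Ed G * R | 0 < snd p < len G (fst p)}) :
  fst (proj1_sig p) <> fst (proj1_sig q) ->
  Rmin (snd (proj1_sig p)) (len G (fst (proj1_sig p)) - snd (proj1_sig p))
    <= dX (iota (inr p)) (iota (inr q)).
Proof.
  intros Hne.
  destruct (geodesic_dist_exists (inr p) (inr q)
              (Rmin (snd (proj1_sig p)) (len G (fst (proj1_sig p)) - snd (proj1_sig p))))
    as [r0 [Hg Hr0]].
  - exists (src G (fst (proj1_sig p))), (snd (proj1_sig p)),
      (src G (fst (proj1_sig q))), (snd (proj1_sig q)).
    simpl. split; left; split; reflexivity.
  - intros r. exact (path_length_distinct_edges_ge p q r Hne).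
  - rewrite (iota_isometry _ _ _ Hg). exact Hr0.
Qed.

End GraphPoints.

Section Level.
Variables (G : MetricGraph) (X : Type) (iota : Point G -> X) (f : X -> R) (t : R).

Local Notation fe := (Defs.fe G X iota f).
Local Notation slope := (Defs.slope G X iota f).

Hypothesis f_affine :
  forall e s, 0 <= s <= len G e -> fe e s = fe e 0 + slope e * s.

(* The parameter at which the affine extension of [f_e] takes the value [t]
   (junk when the slope vanishes). *)
Definition level_crossing (e : Ed G) : R := (t - fe e 0) / slope e.

Definition crosses_level (e : Ed G) : Prop :=
  slope e <> 0 /\ 0 < level_crossing e < len G e.

Lemma fe_affine_crossing e s :
  slope e <> 0 -> 0 <= s <= len G e -> fe e s = t + slope e * (s - level_crossing e).
Proof. intros Hk Hs. rewrite f_affine by exact Hs. unfold level_crossing. field. exact Hk. Qed.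

Lemma fe_level_crossing e : crosses_level e -> fe e (level_crossing e) = t.
Proof. intros [Hk Hr]. rewrite fe_affine_crossing by (auto; lra). ring. Qed.

Lemma fe_noncrossing_ge e s :
  ~ crosses_level e -> 0 <= s <= len G e -> t < fe e s ->
  forall x, 0 <= x <= len G e -> t <= fe e x.
Proof.
  intros Hnc Hs Hts x Hx.
  destruct (Req_dec (slope e) 0) as [Hk0|Hk].
  - rewrite f_affine in Hts |- * by assumption. rewrite Hk0 in Hts |- *. lra.
  - rewrite fe_affine_crossing in Hts |- * by assumption.
    assert (Hr : level_crossing e <= 0 \/ len G e <= level_crossing e).
    { destruct (Rle_dec (level_crossing e) 0); [left; assumption|].
      destruct (Rle_dec (len G e) (level_crossing e)); [right; assumption|].
      exfalso; apply Hnc; split; [exact Hk|lra]. }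
    destruct (Rlt_dec 0 (slope e)); destruct Hr; nra.
Qed.

Lemma seg_in_Gt_above_crossing e :
  crosses_level e -> 0 < slope e ->
  seg_in_Gt G X iota f t e (level_crossing e) (len G e) /\
  ~ seg_in_Gt G X iota f t e 0 (level_crossing e).
Proof.
  intros [Hk Hr] Hpos. split.
  - intros x Hx. rewrite fe_affine_crossing by (auto; lra). nra.
  - intros Hseg. assert (Hz : 0 <= 0 <= level_crossing e) by lra.
    specialize (Hseg 0 Hz). rewrite fe_affine_crossing in Hseg by (auto; lra). nra.
Qed.

Lemma seg_in_Gt_below_crossing e :
  crosses_level e -> slope e < 0 ->
  seg_in_Gt G X iota f t e 0 (level_crossing e) /\
  ~ seg_in_Gt G X iota f t e (level_crossing e) (len G e).
Proof.
  intros [Hk Hr] Hneg. split.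
  - intros x Hx. rewrite fe_affine_crossing by (auto; lra). nra.
  - intros Hseg. assert (Hz : level_crossing e <= len G e <= len G e) by lra.
    specialize (Hseg _ Hz). rewrite fe_affine_crossing in Hseg by (auto; lra). nra.
Qed.

Hypothesis t_regular : ~ critical_value G X iota f t.

Lemma f_vertex_neq_level v : f (iota (inl v)) <> t.
Proof. intros Hv. apply t_regular. exists (inl v). split; [exact I|exact Hv]. Qed.

Lemma fe_interior_eq_level e s :
  0 < s < len G e -> fe e s = t -> crosses_level e /\ s = level_crossing e.
Proof.
  intros Hs Hfs.
  assert (Hk : slope e <> 0).
  { intros Hk0. apply t_regular.
    exists (inr (exist (fun p : Ed G * R => 0 < snd p < len G (fst p)) (e, s) Hs)).
    split; [exact Hk0|]. unfold Defs.fe in Hfs. rewrite (pt_interior G e s Hs) in Hfs.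
    exact Hfs. }
  rewrite f_affine in Hfs by lra.
  assert (Hse : s = level_crossing e) by (unfold level_crossing; rewrite <- Hfs; field; exact Hk).
  split; [split; [exact Hk|rewrite <- Hse; exact Hs]|exact Hse].
Qed.

Lemma level_set_crossings :
  (forall x, f x = t -> exists p, iota p = x) ->
  forall x, f x = t -> exists e, crosses_level e /\ x = iota (pt G e (level_crossing e)).
Proof.
  intros Hgraph x Hx. destruct (Hgraph x Hx) as [[v|[[e s] Hs]] <-].
  - exfalso. exact (f_vertex_neq_level v Hx).
  - simpl in Hs. rewrite <- (pt_interior G e s Hs) in Hx |- *.
    destruct (fe_interior_eq_level e s Hs Hx) as [Hc ->]. exists e. tauto.
Qed.

Lemma crossing_edges_finite (dX : X -> X -> R) :
  is_metric X dX -> compact_space X dX -> continuous_X X dX f ->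
  connected_graph G ->
  (forall x y r, geodesic_dist G x y r -> dX (iota x) (iota y) = r) ->
  (forall x, f x = t -> exists p, iota p = x) ->
  exists l, NoDup l /\ forall e, In e l <-> crosses_level e.
Proof.
  intros [_ [Hdeq [_ Htri]]] Hcpt Hcont Hconn Hiso Hgraph.
  apply (compact_separated_finite X dX (fun x => proj2 (Hdeq x x) eq_refl) Htri
           (Ed G) crosses_level (fun e => iota (pt G e (level_crossing e)))
           (fun e => Rmin (level_crossing e) (len G e - level_crossing e))
           (fun y => f y <> t) Hcpt (open_neq_of_continuous X dX f t Hcont)).
  - intros y Hy. apply NNPP in Hy. exact (level_set_crossings Hgraph y Hy).
  - intros e He Hne. exact (Hne (fe_level_crossing e He)).
  - intros e [_ Hr]. apply Rmin_glb_lt; lra.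
  - intros e e' [_ Hr] [_ Hr'] Hne.
    rewrite (pt_interior G e _ Hr), (pt_interior G e' _ Hr').
    exact (dist_interior_points_distinct_edges G Hconn X dX iota Hiso
             (exist _ (e, level_crossing e) Hr) (exist _ (e', level_crossing e') Hr') Hne).
Qed.

Section Subdivision.
Variable S : list (Ed G * R).
Hypothesis S_crossings :
  forall e c, In (e, c) S <-> crosses_level e /\ c = level_crossing e.

Lemma tilde_edge_no_cut_between e a b :
  0 <= a -> a < b -> b <= len G e -> is_cut G S e a -> is_cut G S e b ->
  (forall c, a < c < b -> ~ In (e, c) S) -> tilde_edge G S e a b.
Proof.
  intros H0a Hab Hb Ha Hbc Hno. repeat split; try assumption.
  intros c Hc [Hc0|[Hcl|Hin]]; [lra|lra|exact (Hno c Hc Hin)].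
Qed.

Lemma tilde_edge_noncrossing e : ~ crosses_level e -> tilde_edge G S e 0 (len G e).
Proof.
  intros Hnc. pose proof (len_pos G e).
  apply tilde_edge_no_cut_between; try (unfold is_cut; tauto); try lra.
  intros c _ Hin. apply S_crossings in Hin. tauto.
Qed.

Lemma tilde_edge_below_crossing e :
  crosses_level e -> tilde_edge G S e 0 (level_crossing e).
Proof.
  intros Hc. pose proof Hc as [_ Hr].
  apply tilde_edge_no_cut_between; try lra; [left; reflexivity| |].
  - right; right. apply S_crossings. tauto.
  - intros c Hc' Hin. apply S_crossings in Hin. lra.
Qed.

Lemma tilde_edge_above_crossing e :
  crosses_level e -> tilde_edge G S e (level_crossing e) (len G e).
Proof.
  intros Hc. pose proof Hc as [_ Hr].
  apply tilde_edge_no_cut_between; try lra; [| right; left; reflexivity |].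
  - right; right. apply S_crossings. tauto.
  - intros c Hc' Hin. apply S_crossings in Hin. lra.
Qed.

Lemma Gt_covered_on_edge e s :
  0 <= s <= len G e -> t <= fe e s -> (~ crosses_level e -> t < fe e s) ->
  exists a b, tilde_edge G S e a b /\ a <= s <= b /\ seg_in_Gt G X iota f t e a b.
Proof.
  intros Hs Hts Hstrict. pose proof (len_pos G e).
  destruct (classic (crosses_level e)) as [Hc|Hnc].
  - pose proof Hc as [Hk Hr]. rewrite fe_affine_crossing in Hts by assumption.
    destruct (Rlt_dec 0 (slope e)) as [Hpos|Hnpos].
    + exists (level_crossing e), (len G e).
      split; [exact (tilde_edge_above_crossing e Hc)|split; [nra|]].
      exact (proj1 (seg_in_Gt_above_crossing e Hc Hpos)).
    + assert (Hneg : slope e < 0) by lra.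
      exists 0, (level_crossing e).
      split; [exact (tilde_edge_below_crossing e Hc)|split; [nra|]].
      exact (proj1 (seg_in_Gt_below_crossing e Hc Hneg)).
  - exists 0, (len G e). split; [exact (tilde_edge_noncrossing e Hnc)|split; [lra|]].
    intros x Hx. exact (fe_noncrossing_ge e s Hnc Hs (Hstrict Hnc) x Hx).
Qed.

Lemma Gt_covered :
  (forall v, exists e, incident G e v) ->
  forall p : Point G, t <= f (iota p) ->
  exists e a b s, tilde_edge G S e a b /\ a <= s <= b /\ p = pt G e s /\
                  seg_in_Gt G X iota f t e a b.
Proof.
  intros Hinc [v|[[e s] Hs]] Hp.
  - assert (Hv : t < f (iota (inl v))) by (pose proof (f_vertex_neq_level v); lra).
    destruct (Hinc v) as [e [<-|<-]]; pose proof (len_pos G e).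
    + assert (He : t < fe e 0) by (unfold Defs.fe; rewrite pt_src; exact Hv).
      destruct (Gt_covered_on_edge e 0) as [a [b Hab]]; [lra|lra|intros _; exact He|].
      exists e, a, b, 0. rewrite pt_src. tauto.
    + assert (He : t < fe e (len G e)) by (unfold Defs.fe; rewrite pt_tgt; exact Hv).
      destruct (Gt_covered_on_edge e (len G e)) as [a [b Hab]]; [lra|lra|intros _; exact He|].
      exists e, a, b, (len G e). rewrite pt_tgt. tauto.
  - simpl in Hs. rewrite <- (pt_interior G e s Hs) in Hp |- *.
    destruct (Gt_covered_on_edge e s) as [a [b Hab]]; [lra|exact Hp| |].
    + intros Hnc. destruct (Rle_lt_or_eq_dec t (fe e s) Hp) as [Hlt|Heq]; [exact Hlt|].
      exfalso. exact (Hnc (proj1 (fe_interior_eq_level e s Hs (eq_sym Heq)))).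
    + exists e, a, b, s. tauto.
Qed.

Lemma crossing_point_degree_one e :
  crosses_level e ->
  exists a b, tilde_edge G S e a (level_crossing e) /\
              tilde_edge G S e (level_crossing e) b /\
    ((seg_in_Gt G X iota f t e (level_crossing e) b /\
      ~ seg_in_Gt G X iota f t e a (level_crossing e) /\ 0 < slope e)
     \/
     (seg_in_Gt G X iota f t e a (level_crossing e) /\
      ~ seg_in_Gt G X iota f t e (level_crossing e) b /\ 0 < - slope e)).
Proof.
  intros Hc. exists 0, (len G e).
  split; [exact (tilde_edge_below_crossing e Hc)|].
  split; [exact (tilde_edge_above_crossing e Hc)|].
  destruct (Rlt_dec 0 (slope e)) as [Hpos|Hnpos].
  - left. pose proof (seg_in_Gt_above_crossing e Hc Hpos). tauto.
  - assert (Hneg : slope e < 0) by (destruct Hc as [Hk _]; lra).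
    right. pose proof (seg_in_Gt_below_crossing e Hc Hneg). split; [tauto|split; [tauto|lra]].
Qed.

End Subdivision.

Lemma crossing_list_exists (dX : X -> X -> R) :
  is_metric X dX -> compact_space X dX -> continuous_X X dX f ->
  connected_graph G ->
  (forall x y r, geodesic_dist G x y r -> dX (iota x) (iota y) = r) ->
  (forall x, f x = t -> exists p, iota p = x) ->
  exists S, NoDup S /\
    forall e c, In (e, c) S <-> crosses_level e /\ c = level_crossing e.
Proof.
  intros Hmet Hcpt Hcont Hconn Hiso Hgraph.
  destruct (crossing_edges_finite dX Hmet Hcpt Hcont Hconn Hiso Hgraph) as [l [Hnd Hl]].
  exists (map (fun e => (e, level_crossing e)) l). split.
  - apply Injective_map_NoDup; [|exact Hnd]. intros e e' H. injection H; auto.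
  - intros e c. rewrite in_map_iff, <- Hl. split.
    + intros [e' [Heq Hin]]. injection Heq as <- <-. tauto.
    + intros [Hin ->]. exists e. tauto.
Qed.

End Level.

Theorem lemma3p10
  (G : MetricGraph) (Bd : Vx G -> Prop)
  (X : Type) (dX : X -> X -> R) (iota : Point G -> X)
  (* standing assumptions on the graph *)
  (Hconn : connected_graph G)
  (HVc : countable_type (Vx G)) (HEdc : countable_type (Ed G))
  (Hlf : locally_finite G)
  (HBd : boundary_vertices_ok G Bd)
  (* X, dX, iota is the metric completion of (G, d) *)
  (Hcompl : is_metric_completion G X dX iota)
  (Hcpt : compact_space X dX)
  (Htd : totally_disconnected X dX (bdry G Bd X iota))
  (* data of the lemma *)
  (E : X -> Prop) (f : X -> R) (C eps t : R)
  (HE : clopen_in X dX (bdry G Bd X iota) E)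
  (HEc : clopen_in X dX (bdry G Bd X iota)
           (fun x => bdry G Bd X iota x /\ ~ E x))
  (HEne : exists x, E x)
  (HEcne : exists x, bdry G Bd X iota x /\ ~ E x)
  (Hharm : harmonic G Bd X dX iota f)
  (HC : 0 <= C)
  (HfE : forall x, E x -> f x = C)
  (HfEc : forall x, bdry G Bd X iota x /\ ~ E x -> C < f x)
  (Heps : 0 < eps)
  (Hreg : regular_value G X iota f t)
  (Hmin : exists m, (exists x0, (bdry G Bd X iota x0 /\ ~ E x0) /\ f x0 = m) /\
                    (forall x, bdry G Bd X iota x /\ ~ E x -> m <= f x) /\
                    C < t < m)
  (Hdist : forall x, f x <= t -> exists y, E y /\ dX x y < eps) :
  exists S : list (Ed G * R),
    NoDup S /\
    (* f^{-1}(t) is the finite set S of points interior to edges *)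
    (forall p, In p S -> 0 < snd p < len G (fst p)) /\
    (forall x, f x = t <-> exists p, In p S /\ x = iota (pt G (fst p) (snd p))) /\
    (* G_t = G~ ∩ f^{-1}([t,oo)) is a union of closed edges of G~ *)
    (forall p : Point G, t <= f (iota p) ->
       exists e a b s, tilde_edge G S e a b /\ a <= s <= b /\ p = pt G e s /\
                       seg_in_Gt G X iota f t e a b) /\
    (* each point (e,s) of f^{-1}(t) has degree one in G_t, and the derivative
       of f at it, into the unique incident edge of G_t, is positive *)
    (forall e s, In (e, s) S ->
       exists a b, tilde_edge G S e a s /\ tilde_edge G S e s b /\
         ((seg_in_Gt G X iota f t e s b /\ ~ seg_in_Gt G X iota f t e a s /\
           0 < slope G X iota f e)
          \/
          (seg_in_Gt G X iota f t e a s /\ ~ seg_in_Gt G X iota f t e s b /\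
           0 < - slope G X iota f e))).
Proof.
  destruct Hharm as [Hcont [Haff _]].
  destruct Hcompl as [Hmet [Hiso [Hdense _]]].
  destruct Hmin as [m [_ [Hm Htm]]].
  destruct Hreg as [_ Hncrit].
  assert (Hgraph : forall x, f x = t -> exists p, iota p = x).
  { intros x Hx. apply NNPP; intros Hno.
    assert (Hb : bdry G Bd X iota x) by (intros [p [_ Hp]]; exact (Hno (ex_intro _ p Hp))).
    destruct (classic (E x)) as [HEx|HEx].
    - rewrite (HfE x HEx) in Hx. lra.
    - pose proof (Hm x (conj Hb HEx)). lra. }
  assert (Hinc : forall v, exists e, incident G e v).
  { destruct Hmet as [Hd0 [Hdeq _]], HEne as [x0 Hx0], HEcne as [x1 [_ Hx1]].
    apply (exists_incident_edge G Hconn X dX iota Hd0 (fun x y => proj1 (Hdeq x y)) Hdense).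
    exists x0, x1. intros <-. exact (Hx1 Hx0). }
  destruct (crossing_list_exists G X iota f t Haff Hncrit dX Hmet Hcpt Hcont Hconn Hiso Hgraph)
    as [S [Hnd HS]].
  exists S. split; [exact Hnd|]. split; [|split; [|split]].
  - intros [e c] Hin. apply HS in Hin. destruct Hin as [[_ Hr] ->]. exact Hr.
  - intros x. split.
    + intros Hx. destruct (level_set_crossings G X iota f t Haff Hncrit Hgraph x Hx) as [e [Hc ->]].
      exists (e, level_crossing G X iota f t e). split; [apply HS; tauto|reflexivity].
    + intros [[e c] [Hin ->]]. apply HS in Hin. destruct Hin as [Hc ->].
      exact (fe_level_crossing G X iota f t Haff e Hc).
  - exact (Gt_covered G X iota f t Haff Hncrit S HS Hinc).
  - intros e s Hin. apply HS in Hin. destruct Hin as [Hc ->].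
    exact (crossing_point_degree_one G X iota f t Haff S HS e Hc).
Qed.
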